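(* With $P$, $\widehat P$, $R_m$, $\Gamma$, $\alpha_\sigma$, $\widehat\alpha_\sigma$ and $\Psi(P,\widehat P)$ as in the context, for every conditional plan $\sigma\in\Gamma$ and every $s\in S$, $$|\alpha_\sigma(s)-\widehat\alpha_\sigma(s)|\le \frac{2\gamma R_m}{(1-\gamma)^2}\,\Psi(P,\widehat P).$$
   Context: $P=\langle S,A,O,T,Z,R,b_0,\gamma\rangle$ is a POMDP with bounded $S\subset\mathbb R^n$, $A\subset\mathbb R^d$, $O\subset\mathbb R^l$, conditional densities $T(s,a,s')=p(s'\mid s,a)$, $Z(s',a,o)=p(o\mid s',a)$, bounded reward $R$, discount $\gamma\in(0,1)$; $\widehat P=\langle S,A,O,\widehat T,\widehat Z,R,b_0,\gamma\rangle$ differs only in transition and observation densities. $R_m=\max\{|\min_{s,a}R(s,a)|,\max_{s,a}R(s,a)\}$. $D_{TV}(\mu,\nu)=\sup_E|\mu(E)-\nu(E)|$. SNM: $\Psi(P,\widehat P)=\sup_{s,a}D_{TV}(T(s,a,\cdot),\widehat T(s,a,\cdot))+\sup_{s,a}D_{TV}(Z(s,a,\cdot),\widehat Z(s,a,\cdot))$. A conditional plan $\sigma=\langle a,\nu\rangle\in\Gamma$ consists of an action $a\in A$ and an observation strategy $\nu:O\to\Gamma$. Its $\alpha$-function is $\alpha_\sigma(s)=R(s,a)+\gamma\int_S\int_O T(s,a,s')Z(s',a,o)\alpha_{\nu(o)}(s')\,do\,ds'$, and $\widehat\alpha_\sigma$ is defined identically with $\widehat T,\widehat Z$. *)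

From HB Require Import structures.
From mathcomp Require Import all_boot all_order all_algebra.
From mathcomp Require Import all_classical all_reals all_analysis.
Set Implicit Arguments. Unset Strict Implicit. Unset Printing Implicit Defensive.
Import Order.TTheory GRing.Theory Num.Theory.
Local Open Scope classical_set_scope.
Local Open Scope ring_scope.

Section POMDPDefs.
Context {R : realType}.

Definition is_density {d} {X : measurableType d}
  (mu : {measure set X -> \bar R}) (p : X -> R) : Prop :=
  [/\ forall x, 0 <= p x, measurable_fun setT p
    & (\int[mu]_(x in setT) (p x)%:E = 1)%E].

Definition tv_dist {d} {X : measurableType d}
  (mu : {measure set X -> \bar R}) (p q : X -> R) : \bar R :=
  ereal_sup [set `| (\int[mu]_(x in E) (p x)%:E - \int[mu]_(x in E) (q x)%:E)%E |%E
            | E in measurable].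

(* The SNM Psi(P, Phat). T(s,a,s') = p(s'|s,a), Z(s',a,o) = p(o|s',a). *)
Definition snm {dS dO} {S : measurableType dS} {O : measurableType dO} {A : Type}
  (muS : {measure set S -> \bar R}) (muO : {measure set O -> \bar R})
  (T Th : S -> A -> S -> R) (Z Zh : S -> A -> O -> R) : \bar R :=
  (ereal_sup [set tv_dist muS (T p.1 p.2) (Th p.1 p.2) | p in [set: S * A]] +
   ereal_sup [set tv_dist muO (Z p.1 p.2) (Zh p.1 p.2) | p in [set: S * A]])%E.

(* R_m = max{ |min R|, max R } (min/max taken as inf/sup of the range). *)
Definition reward_max {S A : Type} (rew : S -> A -> R) : R :=
  Num.max `| inf [set rew p.1 p.2 | p in [set: S * A]] |
          (sup [set rew p.1 p.2 | p in [set: S * A]]).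

(* Conditional plans: Gamma with sigma = <act sigma, nxt sigma>, where
   nxt sigma : O -> Gamma is the observation strategy.  [alpha] is the
   alpha-function of the plans for the model (T, Z): the bounded
   (measurable) solution of
   alpha_sigma(s) = R(s,a) + gamma * int_S int_O T(s,a,s') Z(s',a,o)
                                      alpha_{nu(o)}(s') do ds'. *)
Definition is_alpha_fun {dS dO} {S : measurableType dS} {O : measurableType dO}
  {A : Type} (muS : {measure set S -> \bar R}) (muO : {measure set O -> \bar R})
  (T : S -> A -> S -> R) (Z : S -> A -> O -> R) (rew : S -> A -> R) (gamma : R)
  {Gamma : Type} (act : Gamma -> A) (nxt : Gamma -> O -> Gamma)
  (alpha : Gamma -> S -> R) : Prop :=
  [/\ forall sigma,
        measurable_fun setT (fun x : S * O => alpha (nxt sigma x.2) x.1),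
      exists M : R, forall sigma s, `|alpha sigma s| <= M
    & forall sigma s,
        ((alpha sigma s)%:E =
         (rew s (act sigma))%:E + gamma%:E *
           \int[muS]_(s' in setT) \int[muO]_(o in setT)
              (T s (act sigma) s' * Z s' (act sigma) o * alpha (nxt sigma o) s')%:E)%E].

End POMDPDefs.

From HB Require Import structures.
From mathcomp Require Import all_boot all_order all_algebra.
From mathcomp Require Import all_classical all_reals all_analysis.
From mathcomp Require Import measurable_realfun.
From mathcomp Require Import lra ring.
Import Order.TTheory GRing.Theory Num.Theory.
Local Open Scope classical_set_scope.
Local Open Scope ring_scope.
Set Implicit Arguments. Unset Strict Implicit. Unset Printing Implicit Defensive.

(* Write Rm for the reward bound, B = Rm / (1 - gamma), and pT, pZ for the
   two suprema of total-variation distances forming the SNM.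
   1. Integrating a function bounded by K against a density gives a value of
      modulus at most K; integrating it against two densities p, q gives
      values differing by at most 2 K D_TV(p, q), since the L1 distance of two
      densities is at most twice their TV distance (Hahn split at {q <= p}).
      Together: |int p f - int q g| <= 2 K D_TV(p, q) + sup |f - g|.
   2. A "self-improving bound": if every bound D of a family F yields the
      bound c + gamma D, then F <= c / (1 - gamma).
   3. The Bellman equation of [is_alpha_fun] and step 2 give |alpha| <= B.
   4. Applying step 1 to the inner (observation) and outer (transition)
      integrals, a bound D on |alpha - alphah| yields the bound
      gamma (2 B pT + 2 B pZ + D); step 2 then gives
      |alpha - alphah| <= 2 gamma B (pT + pZ) / (1 - gamma), which is the
      claimed 2 gamma Rm / (1 - gamma)^2 * Psi. *)

Section Densities.
Context {R : realType} {d : measure_display} {X : measurableType d}.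
Variable mu : {measure set X -> \bar R}.

Lemma density_integrable (p : X -> R) :
  is_density mu p -> mu.-integrable setT (EFin \o p).
Proof.
case=> p0 mp ip; apply/integrableP; split; first exact/measurable_EFinP.
rewrite (_ : (fun x => _) = (fun x => (p x)%:E)); last first.
  by apply/funext => x /=; rewrite ger0_norm.
by rewrite ip ltry.
Qed.

Lemma density_mul_integrable (p f : X -> R) (K : R) :
  is_density mu p -> measurable_fun setT f -> (forall x, `|f x| <= K) ->
  mu.-integrable setT (EFin \o (fun x => p x * f x)).
Proof.
move=> hp mf fK; have [p0 mp _] := hp.
apply: (@le_integrable _ _ _ mu setT measurableT _ (fun x => (K * p x)%:E)) => //.
- by apply/measurable_EFinP; exact: measurable_funM.
- move=> x _ /=; rewrite lee_fin normrM (ger0_norm (p0 x)).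
  by rewrite (le_trans _ (ler_norm _))// mulrC ler_wpM2r.
- rewrite (_ : (fun x => _) = (fun x => (K%:E * (EFin \o p) x)%E)); last first.
    by apply/funext => x /=; rewrite EFinM.
  exact/integrableZl/density_integrable.
Qed.

(* A density has total mass one, so its underlying space is inhabited and any
   uniform bound of a function on it is nonnegative. *)
Lemma bound_ge0 (p f : X -> R) (K : R) :
  is_density mu p -> (forall x, `|f x| <= K) -> 0 <= K.
Proof.
case=> _ _ ip fK; have [x _] : exists x : X, True.
  apply: contrapT => hn; move: ip.
  rewrite (_ : setT = set0); last by apply/seteqP; split => // x _; apply: hn; exists x.
  by rewrite integral_set0 => /(congr1 fine) /= h; move: (@oner_neq0 R); rewrite h eqxx.
exact: le_trans (normr_ge0 _) (fK x).
Qed.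

Lemma density_integral_bound (p f : X -> R) (K : R) :
  is_density mu p -> measurable_fun setT f -> (forall x, `|f x| <= K) ->
  `| \int[mu]_x (p x * f x) | <= K.
Proof.
move=> hp mf fK; have [p0 mp ip] := hp.
have ipK : mu.-integrable setT (EFin \o (fun x => K * p x)).
  rewrite (_ : _ \o _ = (fun x => (K%:E * (EFin \o p) x)%E)); last first.
    by apply/funext => x /=; rewrite EFinM.
  exact/integrableZl/density_integrable.
apply: (le_trans (le_normr_Rintegral _ _)) => //.
  exact: density_mul_integrable hp mf fK.
apply: (@le_trans _ _ (\int[mu]_x (K * p x))).
  apply: le_Rintegral => //; last first.
    by move=> x _; rewrite normrM ger0_norm // mulrC ler_wpM2r.
  apply: (le_integrable measurableT _ _ (density_mul_integrable hp mf fK)).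
    by apply/measurable_EFinP; apply: measurableT_comp => //; exact: measurable_funM.
  by move=> x _ /=; rewrite normr_id.
rewrite RintegralZl //; last exact: density_integrable.
by rewrite /Rintegral ip /= mulr1.
Qed.

Lemma density_integralE (p : X -> R) (E : set X) : measurable E ->
  is_density mu p -> (\int[mu]_(x in E) (p x)%:E)%E = (\int[mu]_(x in E) p x)%:E.
Proof.
move=> mE hp; rewrite /Rintegral fineK //; apply: (integrable_fin_num mE).
exact: integrableS measurableT mE (@subsetT _ E) (density_integrable hp).
Qed.

Lemma density_mass01 (p : X -> R) (E : set X) : measurable E ->
  is_density mu p -> 0 <= \int[mu]_(x in E) p x <= 1.
Proof.
move=> mE hp; have [p0 mp ip] := hp.
rewrite -!lee_fin -density_integralE //; apply/andP; split.
  by apply: integral_ge0 => x _; rewrite lee_fin.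
rewrite -ip; apply: ge0_subset_integral => //; first exact/measurable_EFinP.
by move=> x _; rewrite lee_fin.
Qed.

End Densities.

Section TotalVariation.
Context {R : realType} {d : measure_display} {X : measurableType d}.
Variable mu : {measure set X -> \bar R}.

Lemma tv_dist_ge (p q : X -> R) (E : set X) : measurable E ->
  is_density mu p -> is_density mu q ->
  ((`| \int[mu]_(x in E) p x - \int[mu]_(x in E) q x |)%:E <= tv_dist mu p q)%E.
Proof.
move=> mE hp hq; apply: ereal_sup_ubound; exists E => //.
by rewrite !density_integralE // -EFinB.
Qed.

Lemma tv_dist01 (p q : X -> R) : is_density mu p -> is_density mu q ->
  (0 <= tv_dist mu p q <= 1)%E.
Proof.
move=> hp hq; apply/andP; split.
  by apply: le_trans (tv_dist_ge measurable0 hp hq); rewrite lee_fin.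
apply: ge_ereal_sup => _ [E mE <-].
rewrite !density_integralE // -EFinB /= lee_fin.
have /andP[a0 a1] := density_mass01 mE hp.
have /andP[b0 b1] := density_mass01 mE hq.
by rewrite ler_norml; apply/andP; split; lra.
Qed.

Lemma tv_dist_fin_num (p q : X -> R) : is_density mu p -> is_density mu q ->
  tv_dist mu p q \is a fin_num.
Proof.
move=> hp hq; have /andP[t0 t1] := tv_dist01 hp hq.
by rewrite ge0_fin_numE // (le_lt_trans t1) // ltry.
Qed.

Lemma tv_dist_geR (p q : X -> R) (E : set X) : measurable E ->
  is_density mu p -> is_density mu q ->
  `| \int[mu]_(x in E) p x - \int[mu]_(x in E) q x | <= fine (tv_dist mu p q).
Proof.
move=> mE hp hq; rewrite -lee_fin fineK; first exact: tv_dist_ge.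
exact: tv_dist_fin_num.
Qed.

Lemma density_diff_integrable (p q : X -> R) : is_density mu p -> is_density mu q ->
  mu.-integrable setT (EFin \o (fun x => p x - q x)).
Proof.
move=> hp hq; rewrite (_ : _ \o _ = (EFin \o p) \- (EFin \o q))%E; last first.
  by apply/funext => x /=; rewrite EFinB.
exact: integrableB (density_integrable hp) (density_integrable hq).
Qed.

(* The L1 distance of two densities is at most twice their TV distance:
   split the space at E = {q <= p}, where |p - q| = p - q, and its
   complement, where |p - q| = q - p; each piece is bounded by D_TV. *)
Lemma L1_le_tv_dist (p q : X -> R) : is_density mu p -> is_density mu q ->
  \int[mu]_x `|p x - q x| <= 2 * fine (tv_dist mu p q).
Proof.
move=> hp hq; have [_ mp _] := hp; have [_ mq _] := hq.
have iD := density_diff_integrable hp hq.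
have iaD : mu.-integrable setT (EFin \o (fun x => `|p x - q x|)).
  apply: (le_integrable measurableT _ _ iD); last by move=> x _ /=; rewrite normr_id.
  by apply/measurable_EFinP; apply: measurableT_comp => //; exact: measurable_funB.
set E := [set x | q x <= p x].
have mE : measurable E.
  rewrite (_ : E = (fun x => p x - q x) @^-1` `[0, +oo[); last first.
    by apply/seteqP; split => x /=; rewrite in_itv /= andbT subr_ge0.
  have mD : measurable_fun setT (fun x => p x - q x) := measurable_funB mp mq.
  by rewrite -[_ @^-1` _]setTI; apply: mD => //; exact: measurable_itv.
have intE F : measurable F -> mu.-integrable F (EFin \o p) /\ mu.-integrable F (EFin \o q).
  by move=> mF; split; apply: integrableS measurableT mF (@subsetT _ F) _;
    exact: density_integrable.
have mC := measurableC mE.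
have [ipE iqE] := intE _ mE; have [ipC iqC] := intE _ mC.
rewrite -(setUv E) Rintegral_setU //; last 2 first.
- by rewrite setUv.
- by rewrite disj_set2E setICr.
rewrite (@eq_Rintegral _ _ _ mu E (fun x => p x - q x)); last first.
  by move=> x; rewrite inE /E /= => h; rewrite ger0_norm // subr_ge0.
rewrite (@eq_Rintegral _ _ _ mu (~` E) (fun x => q x - p x)); last first.
  move=> x; rewrite inE /E /= => /negP; rewrite -ltNge => h.
  by rewrite ltr0_norm ?opprB // subr_lt0.
have onE : \int[mu]_(x in E) (p x - q x) <= fine (tv_dist mu p q).
  by rewrite RintegralB //; exact: le_trans (ler_norm _) (tv_dist_geR mE hp hq).
have onC : \int[mu]_(x in ~` E) (q x - p x) <= fine (tv_dist mu p q).
  rewrite RintegralB //; apply: le_trans (ler_norm _) _.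
  by rewrite distrC; exact: tv_dist_geR.
lra.
Qed.

Lemma tv_integral_bound (p q f : X -> R) (K : R) :
  is_density mu p -> is_density mu q -> measurable_fun setT f ->
  (forall x, `|f x| <= K) ->
  `| \int[mu]_x (p x * f x) - \int[mu]_x (q x * f x) | <= 2 * K * fine (tv_dist mu p q).
Proof.
move=> hp hq mf fK; have [_ mp _] := hp; have [_ mq _] := hq.
have K0 := bound_ge0 hp fK.
have ipf := density_mul_integrable hp mf fK.
have iqf := density_mul_integrable hq mf fK.
have iDf : mu.-integrable setT (EFin \o (fun x => (p x - q x) * f x)).
  rewrite (_ : _ \o _ =
    (EFin \o (fun x => p x * f x)%R) \- (EFin \o (fun x => q x * f x)%R))%E.
    exact: integrableB ipf iqf.
  by apply/funext => x /=; rewrite -EFinB mulrBl.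
have iaD : mu.-integrable setT (EFin \o (fun x => `|p x - q x|)).
  apply: (le_integrable measurableT _ _ (density_diff_integrable hp hq)).
    by apply/measurable_EFinP; apply: measurableT_comp => //; exact: measurable_funB.
  by move=> x _ /=; rewrite normr_id.
rewrite -RintegralB // (@eq_Rintegral _ _ _ mu _ (fun x => (p x - q x) * f x)); last first.
  by move=> x _; rewrite mulrBl.
apply: (le_trans (le_normr_Rintegral _ _)) => //.
apply: (@le_trans _ _ (\int[mu]_x (K * `|p x - q x|))).
  apply: le_Rintegral => //.
  - apply: (le_integrable measurableT _ _ iDf); last by move=> x _ /=; rewrite normr_id.
    apply/measurable_EFinP; apply: measurableT_comp => //.
    by apply: measurable_funM => //; exact: measurable_funB.
  - rewrite (_ : _ \o _ = (fun x => (K%:E * (EFin \o (fun x => `|p x - q x|)%R) x)%E)).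
      exact/integrableZl.
    by apply/funext => x /=; rewrite EFinM.
  - by move=> x _; rewrite normrM mulrC ler_wpM2r.
rewrite RintegralZl // [2 * K]mulrC -mulrA; apply: ler_wpM2l => //.
exact: L1_le_tv_dist.
Qed.

Lemma density_perturb (p q f g : X -> R) (K L t : R) :
  is_density mu p -> is_density mu q ->
  measurable_fun setT f -> measurable_fun setT g ->
  (forall x, `|f x| <= K) -> (forall x, `|g x| <= K) ->
  (forall x, `|f x - g x| <= L) -> fine (tv_dist mu p q) <= t ->
  `| \int[mu]_x (p x * f x) - \int[mu]_x (q x * g x) | <= 2 * K * t + L.
Proof.
move=> hp hq mf mg fK gK fgL tvt.
have K0 := bound_ge0 hp fK.
rewrite -(subrK (\int[mu]_x (q x * f x)) (\int[mu]_x (p x * f x))) -addrA.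
apply: (le_trans (ler_normD _ _)); apply: lerD.
  apply: (le_trans (tv_integral_bound hp hq mf fK)).
  by apply: ler_wpM2l; rewrite ?mulr_ge0.
have iqf := density_mul_integrable hq mf fK.
have iqg := density_mul_integrable hq mg gK.
rewrite -RintegralB //.
rewrite (@eq_Rintegral _ _ _ mu _ (fun x => q x * (f x - g x))); last first.
  by move=> x _; rewrite mulrBr.
exact: density_integral_bound hq (measurable_funB mf mg) fgL.
Qed.

Lemma tv_sup_bound {Y : Type} (P Q : Y -> X -> R) (y0 : Y) :
  (forall y, is_density mu (P y)) -> (forall y, is_density mu (Q y)) ->
  let psi := ereal_sup [set tv_dist mu (P y) (Q y) | y in [set: Y]] in
  psi \is a fin_num /\ forall y, fine (tv_dist mu (P y) (Q y)) <= fine psi.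
Proof.
move=> hP hQ psi.
have ub y : (tv_dist mu (P y) (Q y) <= psi)%E by apply: ereal_sup_ubound; exists y.
have /andP[t0 _] := tv_dist01 (hP y0) (hQ y0).
have p0 : (0 <= psi)%E := le_trans t0 (ub y0).
have p1 : (psi <= 1)%E.
  by apply: ge_ereal_sup => _ [y _ <-]; have /andP[] := tv_dist01 (hP y) (hQ y).
have fin : psi \is a fin_num by rewrite ge0_fin_numE // (le_lt_trans p1) // ltry.
split => // y; apply: fine_le; [exact: tv_dist_fin_num | exact: fin | exact: ub].
Qed.

End TotalVariation.

(* If every uniform bound D on F improves to the bound c + g D, with
   0 <= g < 1, then F is bounded by the fixed point c / (1 - g).  Applied to
   the supremum of F (which exists when F is bounded). *)
Lemma self_improving_bound {R : realType} {I : Type} (F : I -> R) (c g : R) :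
  0 <= g < 1 -> (exists M, forall i, F i <= M) ->
  (forall D, (forall i, F i <= D) -> forall i, F i <= c + g * D) ->
  forall i, F i <= c / (1 - g).
Proof.
move=> /andP[g0 g1] [M hM] improve i.
have ne : range F !=set0 by exists (F i), i.
have ub : has_ubound (range F) by exists M => _ [j _ <-]; exact: hM.
have Fsup j : F j <= sup (range F) by apply: ub_le_sup => //; exists j.
have fix_ineq : sup (range F) <= c + g * sup (range F).
  by apply: ge_sup => // _ [j _ <-]; exact: improve.
apply: le_trans (Fsup i) _; rewrite ler_pdivlMr ?subr_gt0 //; nra.
Qed.

Lemma reward_max_ge {R : realType} {S A : Type} (rew : S -> A -> R) :
  (exists M : R, forall s a, `|rew s a| <= M) ->
  forall s a, `|rew s a| <= reward_max rew.
Proof.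
case=> M hM s a; set Er := [set rew p.1 p.2 | p in [set: S * A]].
have ne : Er !=set0 by exists (rew s a), (s, a).
have hub : has_ubound Er by exists M => _ [p _ <-]; exact: le_trans (ler_norm _) (hM _ _).
have hlb : has_lbound Er.
  by exists (- M) => _ [p _ <-]; have := hM p.1 p.2; rewrite ler_norml => /andP[].
have rew_le_sup : rew s a <= sup Er by apply: ub_le_sup => //; exists (s, a).
have inf_le_rew : inf Er <= rew s a by apply: ge_inf => //; exists (s, a).
rewrite /reward_max -/Er le_max; have [r0|r0] := leP 0 (rew s a).
  by rewrite ger0_norm // rew_le_sup orbT.
apply/orP; left; rewrite ltr0_norm // ler_normr; apply/orP; right.
by rewrite lerN2.
Qed.

(* For a sigma-finite measure nu, integrating out the second coordinate of a
   jointly measurable real function gives a measurable function (Tonelli,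
   applied to the positive and negative parts). *)
Section PartialIntegral.
Context {R : realType} {dS dO : measure_display}.
Context (S : measurableType dS) (O : measurableType dO).
Variable nu : {measure set O -> \bar R}.
Hypothesis nu_sfinite : sigma_finite setT nu.

Let nu' := (nu : set O -> \bar R).
HB.instance Definition _ := Measure.on nu'.
HB.instance Definition _ := Measure_isSigmaFinite.Build _ _ _ nu' nu_sfinite.

Lemma measurable_partial_integral (f : S * O -> R) : measurable_fun setT f ->
  measurable_fun setT (fun s => \int[nu]_o f (s, o)).
Proof.
move=> mf; have mfE : measurable_fun setT (EFin \o f) by exact/measurable_EFinP.
have mpos := @measurable_fun_fubini_tonelli_F _ _ S O R nu' _
  (measurable_funepos mfE) (fun x => funepos_ge0 _ x).
have mneg := @measurable_fun_fubini_tonelli_F _ _ S O R nu' _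
  (measurable_funeneg mfE) (fun x => funeneg_ge0 _ x).
apply: (measurableT_comp (@fine_measurable R setT measurableT)).
apply: eq_measurable_fun (emeasurable_funB mpos mneg) => x _.
rewrite /fubini_F /= [RHS]integralE; congr (_ - _)%E; apply: eq_integral => y _.
  by rewrite !funeposE.
by rewrite !funenegE.
Qed.

End PartialIntegral.

Section AlphaFunction.
Context {R : realType} {dS dO : measure_display}.
Context {S : measurableType dS} {O : measurableType dO} {A Gamma : Type}.
Variables (muS : {measure set S -> \bar R}) (muO : {measure set O -> \bar R}).
Hypothesis muO_sfinite : sigma_finite setT muO.
Variables (T : S -> A -> S -> R) (Z : S -> A -> O -> R) (rew : S -> A -> R).
Variables (gamma : R) (act : Gamma -> A) (nxt : Gamma -> O -> Gamma).
Variable alpha : Gamma -> S -> R.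
Hypotheses (hT : forall s a, is_density muS (T s a))
  (hZ : forall s a, is_density muO (Z s a))
  (hZm : forall a, measurable_fun setT (fun x : S * O => Z x.1 a x.2))
  (halpha : is_alpha_fun muS muO T Z rew gamma act nxt alpha).

Definition cont_value (sigma : Gamma) (s' : S) : R :=
  \int[muO]_o (Z s' (act sigma) o * alpha (nxt sigma o) s').

Lemma alpha_section_measurable sigma s' :
  measurable_fun setT (fun o => alpha (nxt sigma o) s').
Proof.
have [malpha _ _] := halpha.
exact: measurableT_comp (malpha sigma) (@pair1_measurable _ _ S O s').
Qed.

Lemma cont_value_measurable sigma : measurable_fun setT (cont_value sigma).
Proof.
have [malpha _ _] := halpha.
exact: (measurable_partial_integral muO_sfinite
  (measurable_funM (hZm (act sigma)) (malpha sigma))).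
Qed.

Lemma cont_value_bound sigma (B : R) : (forall sigma s, `|alpha sigma s| <= B) ->
  forall s', `|cont_value sigma s'| <= B.
Proof.
by move=> hB s'; apply: density_integral_bound (hZ s' _) (alpha_section_measurable _ _) _.
Qed.

Lemma bellman sigma s :
  alpha sigma s = rew s (act sigma) +
                  gamma * \int[muS]_s' (T s (act sigma) s' * cont_value sigma s').
Proof.
have [_ [M hM] heq] := halpha; move: (heq sigma s).
rewrite (@eq_integral _ _ _ muS setT
  (fun s' => (T s (act sigma) s' * cont_value sigma s')%:E)); last first.
  move=> s' _; have hi := density_mul_integrable (hZ s' (act sigma))
    (alpha_section_measurable sigma s') (fun o => hM (nxt sigma o) s').
  rewrite (@eq_integral _ _ _ muO setT (fun o => ((T s (act sigma) s')%:E *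
      (EFin \o (fun o => Z s' (act sigma) o * alpha (nxt sigma o) s')%R) o)%E)); last first.
    by move=> o _ /=; rewrite -mulrA EFinM.
  rewrite integralZl // EFinM /cont_value /Rintegral fineK //.
  exact: (integrable_fin_num measurableT hi).
have hi := density_mul_integrable (hT s (act sigma)) (cont_value_measurable sigma)
  (cont_value_bound sigma hM).
rewrite -[X in (_ + _ * X)%E](@fineK _ (\int[muS]_(s' in _) _)%E); last first.
  exact: (integrable_fin_num measurableT hi).
by rewrite -EFinM -EFinD => /eqP; rewrite eqe => /eqP.
Qed.

Lemma alpha_bound : 0 < gamma < 1 ->
  (exists M : R, forall s a, `|rew s a| <= M) ->
  forall sigma s, `|alpha sigma s| <= reward_max rew / (1 - gamma).
Proof.
move=> /andP[g0 g1] hrew; have [_ bounded _] := halpha.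
move=> sigma s; apply: (self_improving_bound (F := fun x : Gamma * S => `|alpha x.1 x.2|))
  (sigma, s); first by rewrite ltW.
  by case: bounded => M hM; exists M => -[].
move=> B hB [sigma' s'] /=; rewrite bellman.
apply: (le_trans (ler_normD _ _)); apply: lerD; first exact: reward_max_ge.
rewrite normrM (ger0_norm (ltW g0)); apply: ler_wpM2l; first exact: ltW.
apply: density_integral_bound (hT _ _) (cont_value_measurable _) _.
by apply: cont_value_bound => sigma'' s''; exact: (hB (sigma'', s'')).
Qed.

End AlphaFunction.

Section Perturbation.
Context {R : realType} {dS dO : measure_display}.
Context {S : measurableType dS} {O : measurableType dO} {A Gamma : Type}.
Variables (muS : {measure set S -> \bar R}) (muO : {measure set O -> \bar R}).
Hypothesis muO_sfinite : sigma_finite setT muO.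
Variables (T Th : S -> A -> S -> R) (Z Zh : S -> A -> O -> R) (rew : S -> A -> R).
Variables (gamma : R) (act : Gamma -> A) (nxt : Gamma -> O -> Gamma).
Variables (alpha alphah : Gamma -> S -> R).
Hypotheses (hT : forall s a, is_density muS (T s a))
  (hTh : forall s a, is_density muS (Th s a))
  (hZ : forall s a, is_density muO (Z s a))
  (hZh : forall s a, is_density muO (Zh s a))
  (hZm : forall a, measurable_fun setT (fun x : S * O => Z x.1 a x.2))
  (hZhm : forall a, measurable_fun setT (fun x : S * O => Zh x.1 a x.2))
  (halpha : is_alpha_fun muS muO T Z rew gamma act nxt alpha)
  (halphah : is_alpha_fun muS muO Th Zh rew gamma act nxt alphah).
Variables (B pT pZ : R).
Hypotheses (hB : forall sigma s, `|alpha sigma s| <= B)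
  (hBh : forall sigma s, `|alphah sigma s| <= B)
  (hpT : forall s a, fine (tv_dist muS (T s a) (Th s a)) <= pT)
  (hpZ : forall s a, fine (tv_dist muO (Z s a) (Zh s a)) <= pZ).

Lemma cont_value_diff (D : R) :
  (forall sigma s, `|alpha sigma s - alphah sigma s| <= D) ->
  forall sigma s', `|cont_value muO Z act nxt alpha sigma s' -
                     cont_value muO Zh act nxt alphah sigma s'| <= 2 * B * pZ + D.
Proof.
move=> hD sigma s'; apply: density_perturb (hZ _ _) (hZh _ _) _ _ _ _ _ (hpZ _ _).
- exact: alpha_section_measurable halpha _ _.
- exact: alpha_section_measurable halphah _ _.
- by move=> o; exact: hB.
- by move=> o; exact: hBh.
- by move=> o; exact: hD.
Qed.

Lemma alpha_diff_step (D : R) : 0 <= gamma ->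
  (forall sigma s, `|alpha sigma s - alphah sigma s| <= D) ->
  forall sigma s,
    `|alpha sigma s - alphah sigma s| <= gamma * (2 * B * pT + (2 * B * pZ + D)).
Proof.
move=> g0 hD sigma s.
rewrite (bellman muO_sfinite hT hZ hZm halpha) (bellman muO_sfinite hTh hZh hZhm halphah).
rewrite [X in `|X|](_ : _ = gamma * (\int[muS]_s' (T s (act sigma) s' *
    cont_value muO Z act nxt alpha sigma s') - \int[muS]_s' (Th s (act sigma) s' *
    cont_value muO Zh act nxt alphah sigma s'))); last by ring.
rewrite normrM (ger0_norm g0); apply: ler_wpM2l => //.
apply: density_perturb (hT _ _) (hTh _ _) _ _ _ _ (cont_value_diff hD sigma) (hpT _ _).
- exact: (cont_value_measurable muO_sfinite hZm halpha sigma).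
- exact: (cont_value_measurable muO_sfinite hZhm halphah sigma).
- exact: (cont_value_bound hZ halpha sigma hB).
- exact: (cont_value_bound hZh halphah sigma hBh).
Qed.

End Perturbation.

Unset Implicit Arguments.

Theorem lemma1 (R : realType) (dS dO : measure_display)
  (S : measurableType dS) (O : measurableType dO) (A : Type)
  (muS : {measure set S -> \bar R}) (muO : {measure set O -> \bar R})
  (hmuS : sigma_finite setT muS) (hmuO : sigma_finite setT muO)
  (T Th : S -> A -> S -> R) (Z Zh : S -> A -> O -> R)
  (rew : S -> A -> R) (gamma : R)
  (hgamma : 0 < gamma < 1)
  (hrew : exists M : R, forall s a, `|rew s a| <= M)
  (hT : forall s a, is_density muS (T s a))
  (hTh : forall s a, is_density muS (Th s a))
  (hZ : forall s' a, is_density muO (Z s' a))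
  (hZh : forall s' a, is_density muO (Zh s' a))
  (hZm : forall a, measurable_fun setT (fun x : S * O => Z x.1 a x.2))
  (hZhm : forall a, measurable_fun setT (fun x : S * O => Zh x.1 a x.2))
  (Gamma : Type) (act : Gamma -> A) (nxt : Gamma -> O -> Gamma)
  (alpha alphah : Gamma -> S -> R)
  (halpha : is_alpha_fun muS muO T Z rew gamma act nxt alpha)
  (halphah : is_alpha_fun muS muO Th Zh rew gamma act nxt alphah) :
  forall (sigma : Gamma) (s : S),
    ((`| alpha sigma s - alphah sigma s |)%:E <=
     ((2 * gamma * reward_max rew) / (1 - gamma) ^+ 2)%:E
       * snm muS muO T Th Z Zh)%E.
Proof.
move=> sigma s; have /andP[g0 g1] := hgamma.
have hB := alpha_bound hmuO hT hZ hZm halpha hgamma hrew.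
have hBh := alpha_bound hmuO hTh hZh hZhm halphah hgamma hrew.
set B := reward_max rew / (1 - gamma) in hB hBh.
have [finT hpT] := tv_sup_bound (P := fun p : S * A => T p.1 p.2)
  (Q := fun p => Th p.1 p.2) (s, act sigma) (fun p => hT p.1 p.2) (fun p => hTh p.1 p.2).
have [finZ hpZ] := tv_sup_bound (P := fun p : S * A => Z p.1 p.2)
  (Q := fun p => Zh p.1 p.2) (s, act sigma) (fun p => hZ p.1 p.2) (fun p => hZh p.1 p.2).
set psiT := ereal_sup _ in finT hpT; set psiZ := ereal_sup _ in finZ hpZ.
set pT := fine psiT in hpT; set pZ := fine psiZ in hpZ.
have step := alpha_diff_step hmuO hT hTh hZ hZh hZm hZhm halpha halphah hB hBh
  (fun s a => hpT (s, a)) (fun s a => hpZ (s, a)) (ltW g0).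
have le_diff : `|alpha sigma s - alphah sigma s| <=
               gamma * (2 * B * (pT + pZ)) / (1 - gamma).
  apply: (self_improving_bound
    (F := fun x : Gamma * S => `|alpha x.1 x.2 - alphah x.1 x.2|)) (sigma, s).
  - by rewrite (ltW g0) g1.
  - exists (B + B) => -[sigma' s'].
    exact: le_trans (ler_normB _ _) (lerD (hB _ _) (hBh _ _)).
  - move=> D hD [sigma' s'] /=.
    have -> : gamma * (2 * B * (pT + pZ)) + gamma * D =
              gamma * (2 * B * pT + (2 * B * pZ + D)) by ring.
    exact: step (fun sigma s => hD (sigma, s)) sigma' s'.
rewrite /snm -/psiT -/psiZ -(fineK finT) -(fineK finZ) -EFinD -EFinM lee_fin.
apply: le_trans le_diff _; rewrite le_eqVlt; apply/orP; left; apply/eqP.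
by rewrite /B /pT /pZ; field; rewrite subr_eq0 eq_sym lt_eqF.
Qed.
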